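(* There is an absolute constant $C>0$ such that for all $\varepsilon\in(0,1]$, $\gamma\in(0,1]$ and $n\ge C/(\gamma^2\varepsilon^2)$ there exists a symmetric private-coin $\varepsilon$-LDP protocol with $n$ users, each holding an i.i.d. sample from an unknown $p\in\Delta(\{0,1\}\times\{0,1\})$, whose curator outputs ``independent'' with probability at least $2/3$ if $p$ is a product distribution, and ``not independent'' with probability at least $2/3$ if $p$ is $\gamma$-far from every product distribution.
   Context: $d_{TV}(p,q)=\frac12\|p-q\|_1$. $p$ is a product distribution if $p(x_1,x_2)=p_1(x_1)p_2(x_2)$ for some distributions $p_1,p_2$ on $\{0,1\}$; $p$ is $\gamma$-far from product if $d_{TV}(p,q)>\gamma$ for every product $q$. Private-coin symmetric protocol: each user sends $Z_j\sim W(\cdot\mid X_j)$ for a single channel $W$ into a finite set, independently across users, and the curator outputs a possibly randomized function of $(Z_1,\dots,Z_n)$; $\varepsilon$-LDP means $W(z\mid x)\le e^\varepsilon W(z\mid x')$ for all $z,x,x'$. *)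

From Stdlib Require Import Reals List.
Open Scope R_scope.

Fixpoint sumR (m : nat) (g : nat -> R) : R :=
  match m with
  | O => 0
  | S k => sumR k g + g k
  end.

(* Sum over the four points of {0,1} x {0,1} (bool encodes {0,1}). *)
Definition sum4 (g : bool -> bool -> R) : R :=
  g false false + g false true + g true false + g true true.

Definition is_dist2 (p : bool -> bool -> R) : Prop :=
  (forall a b, 0 <= p a b) /\ sum4 p = 1.

Definition is_dist1 (p : bool -> R) : Prop :=
  (forall a, 0 <= p a) /\ p false + p true = 1.

Definition dTV (p q : bool -> bool -> R) : R :=
  / 2 * sum4 (fun a b => Rabs (p a b - q a b)).

Definition is_product (p : bool -> bool -> R) : Prop :=
  exists p1 p2 : bool -> R, is_dist1 p1 /\ is_dist1 p2 /\
    forall a b, p a b = p1 a * p2 b.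

Definition gamma_far (gam : R) (p : bool -> bool -> R) : Prop :=
  forall q, is_dist2 q -> is_product q -> dTV p q > gam.

(* A channel W(z | x) into the finite message set {0,...,m-1}:
   W z a b = W(z | (a,b)). *)
Definition is_channel (m : nat) (W : nat -> bool -> bool -> R) : Prop :=
  (forall z a b, 0 <= W z a b) /\
  (forall a b, sumR m (fun z => W z a b) = 1).

Definition is_LDP (eps : R) (m : nat) (W : nat -> bool -> bool -> R) : Prop :=
  forall z a b a' b', (z < m)%nat -> W z a b <= exp eps * W z a' b'.

Definition msg_law (W : nat -> bool -> bool -> R) (p : bool -> bool -> R)
  (z : nat) : R := sum4 (fun a b => p a b * W z a b).

(* E[ f(Z_1,...,Z_n) ] for Z_1..Z_n i.i.d. with law q on {0..m-1}. *)
Fixpoint expect_iid (n m : nat) (q : nat -> R) (f : list nat -> R) : R :=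
  match n with
  | O => f nil
  | S k => sumR m (fun z => q z * expect_iid k m q (fun l => f (z :: l)))
  end.

(* Probability that the curator, whose (randomized) decision outputs
   "independent" with probability f(Z_1..Z_n), outputs "independent". *)
Definition prob_indep (n m : nat) (W : nat -> bool -> bool -> R)
  (f : list nat -> R) (p : bool -> bool -> R) : R :=
  expect_iid n m (msg_law W p) f.

From Stdlib Require Import Reals List Lra Lia Psatz.
Open Scope R_scope.

(* Each user picks one of the three sign features (-1)^a, (-1)^b, (-1)^(a xor b)
   uniformly at random and releases it by e^eps-randomized response; rescaling gives
   unbiased estimators of their means with second moment O(1/eps^2).  With the users
   split into three groups, (mean of group 1) * (mean of group 2) - (mean of group 3)
   estimates E[(-1)^a] E[(-1)^b] - E[(-1)^(a xor b)] = -4 (p00 p11 - p01 p10).  This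
   vanishes on product distributions, while the product of the marginals of p is at
   distance 2 |p00 p11 - p01 p10| from p, so it exceeds 2 gamma in absolute value when
   p is gamma-far from product.  The estimator has mean square error O(1/(n eps^2)), so
   by Chebyshev the test |T| <= gamma errs with probability at most 1/3 once
   n gamma^2 eps^2 is a large enough constant. *)

Lemma sumR_ext m g h : (forall z, g z = h z) -> sumR m g = sumR m h.
Proof. intro H; induction m; simpl; [reflexivity | rewrite IHm, H; reflexivity]. Qed.

Lemma sumR_plus m g h : sumR m (fun z => g z + h z) = sumR m g + sumR m h.
Proof. induction m; simpl; [ring | rewrite IHm; ring]. Qed.

Lemma sumR_scal m c g : sumR m (fun z => c * g z) = c * sumR m g.
Proof. induction m; simpl; [ring | rewrite IHm; ring]. Qed.

Lemma sumR_le m g h : (forall z, g z <= h z) -> sumR m g <= sumR m h.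
Proof. intro H; induction m; simpl; [lra | specialize (H m); lra]. Qed.

Definition mean (m : nat) (q : nat -> R) (phi : nat -> R) : R :=
  sumR m (fun z => q z * phi z).

Fixpoint sum_first (k : nat) (phi : nat -> R) (l : list nat) : R :=
  match k, l with
  | S k', z :: l' => phi z + sum_first k' phi l'
  | _, _ => 0
  end.

Definition sample_mean (k : nat) (phi : nat -> R) (l : list nat) : R :=
  sum_first k phi l / INR k.

Lemma sample_mean_firstn k phi l : sample_mean k phi (firstn k l) = sample_mean k phi l.
Proof.
  unfold sample_mean; f_equal.
  revert l; induction k as [|k IH]; intros [|z l]; simpl; auto.
  rewrite IH; reflexivity.
Qed.

Lemma sq_add_mul_sub_le u v w a :
  a ^ 2 <= 1 -> (u + a * v - w) ^ 2 <= 4 * u ^ 2 + 4 * v ^ 2 + 2 * w ^ 2.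
Proof.
  intro Ha.
  assert ((u + a * v - w) ^ 2 <= 2 * (u + a * v) ^ 2 + 2 * w ^ 2)
    by (pose proof (pow2_ge_0 (u + a * v + w)); nra).
  assert ((u + a * v) ^ 2 <= 2 * u ^ 2 + 2 * (a * v) ^ 2)
    by (pose proof (pow2_ge_0 (u - a * v)); nra).
  assert ((a * v) ^ 2 <= v ^ 2) by (rewrite Rpow_mult_distr; nra).
  lra.
Qed.

Lemma one_le_sq_div_sq c x : 0 < c -> c <= Rabs x -> 1 <= x ^ 2 / c ^ 2.
Proof.
  intros Hc Hx; rewrite <- (pow2_abs x).
  apply Rmult_le_reg_r with (c ^ 2); [nra |].
  unfold Rdiv; rewrite Rmult_assoc, Rinv_l by nra; nra.
Qed.

Definition accept_small (g : R) (T : list nat -> R) (l : list nat) : R :=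
  if Rle_dec (Rabs (T l)) g then 1 else 0.

Section IidExpectation.

Variables (m : nat) (q : nat -> R).

Lemma expect_iid_ext n f g :
  (forall l, f l = g l) -> expect_iid n m q f = expect_iid n m q g.
Proof.
  revert f g; induction n; intros f g H; simpl; [apply H |].
  apply sumR_ext; intro z; f_equal; apply IHn; intro; apply H.
Qed.

Lemma expect_iid_plus n f g :
  expect_iid n m q (fun l => f l + g l) = expect_iid n m q f + expect_iid n m q g.
Proof.
  revert f g; induction n; intros f g; simpl; [reflexivity |].
  rewrite <- sumR_plus; apply sumR_ext; intro z.
  rewrite (IHn (fun l => f (z :: l)) (fun l => g (z :: l))); ring.
Qed.

Lemma expect_iid_scal n c f :
  expect_iid n m q (fun l => c * f l) = c * expect_iid n m q f.
Proof.
  revert f; induction n; intros f; simpl; [reflexivity |].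
  rewrite <- sumR_scal; apply sumR_ext; intro z.
  rewrite (IHn (fun l => f (z :: l))); ring.
Qed.

Lemma expect_iid_split_mult k j g h :
  expect_iid (k + j) m q (fun l => g (firstn k l) * h (skipn k l)) =
  expect_iid k m q g * expect_iid j m q h.
Proof.
  revert g; induction k as [|k IH]; intros g; simpl.
  - exact (expect_iid_scal j (g nil) h).
  - rewrite Rmult_comm, <- sumR_scal; apply sumR_ext; intro z.
    rewrite (IH (fun l => g (z :: l))); ring.
Qed.

Hypothesis q_nonneg : forall z, 0 <= q z.
Hypothesis q_sum1 : sumR m q = 1.

Lemma expect_iid_const n c : expect_iid n m q (fun _ => c) = c.
Proof.
  induction n; simpl; [reflexivity |].
  rewrite IHn, (sumR_ext _ _ (fun z => c * q z)), sumR_scal, q_sum1 by (intro; ring).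
  ring.
Qed.

Lemma expect_iid_le n f g :
  (forall l, f l <= g l) -> expect_iid n m q f <= expect_iid n m q g.
Proof.
  revert f g; induction n; intros f g H; simpl; [apply H |].
  apply sumR_le; intro z; apply Rmult_le_compat_l; [apply q_nonneg |].
  apply IHn; intro; apply H.
Qed.

Lemma expect_iid_sq_ge0 n f : 0 <= expect_iid n m q (fun l => f l ^ 2).
Proof.
  rewrite <- (expect_iid_const n 0); apply expect_iid_le; intro; apply pow2_ge_0.
Qed.

Lemma expect_iid_firstn k j g :
  expect_iid (k + j) m q (fun l => g (firstn k l)) = expect_iid k m q g.
Proof.
  rewrite (expect_iid_ext _ _ (fun l => g (firstn k l) * (fun _ => 1) (skipn k l)))
    by (intro; ring).
  rewrite (expect_iid_split_mult k j g (fun _ => 1)), expect_iid_const; ring.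
Qed.

Lemma expect_iid_skipn k j h :
  expect_iid (k + j) m q (fun l => h (skipn k l)) = expect_iid j m q h.
Proof.
  rewrite (expect_iid_ext _ _ (fun l => (fun _ => 1) (firstn k l) * h (skipn k l)))
    by (intro; ring).
  rewrite (expect_iid_split_mult k j (fun _ => 1) h), expect_iid_const; ring.
Qed.

Lemma expect_iid_sum_first k phi :
  expect_iid k m q (sum_first k phi) = INR k * mean m q phi.
Proof.
  induction k as [|k IH]; simpl; [ring |].
  rewrite (sumR_ext _ _ (fun z => q z * phi z + (INR k * mean m q phi) * q z)).
  - rewrite sumR_plus, sumR_scal, q_sum1; unfold mean; destruct k; simpl; ring.
  - intro z; rewrite expect_iid_plus, expect_iid_const, IH; ring.
Qed.

Lemma expect_iid_sum_first_sq k phi :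
  expect_iid k m q (fun l => sum_first k phi l ^ 2) =
  INR k * mean m q (fun z => phi z ^ 2) + (INR k ^ 2 - INR k) * mean m q phi ^ 2.
Proof.
  induction k as [|k IH]; simpl; [ring |].
  rewrite (sumR_ext _ _ (fun z => q z * phi z ^ 2 + (2 * INR k * mean m q phi) * (q z * phi z)
     + (INR k * mean m q (fun z => phi z ^ 2)
        + (INR k ^ 2 - INR k) * mean m q phi ^ 2) * q z)).
  - rewrite !sumR_plus, !sumR_scal, q_sum1; unfold mean; destruct k; simpl; ring.
  - intro z.
    rewrite (expect_iid_ext _ _
      (fun l => phi z ^ 2 + ((2 * phi z) * sum_first k phi l + sum_first k phi l ^ 2)))
      by (intro; ring).
    rewrite expect_iid_plus, expect_iid_const, expect_iid_plus, expect_iid_scal, IH,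
      expect_iid_sum_first.
    ring.
Qed.

Lemma expect_iid_sample_mean_sq k phi : (0 < k)%nat ->
  expect_iid k m q (fun l => sample_mean k phi l ^ 2) =
  mean m q phi ^ 2 + (mean m q (fun z => phi z ^ 2) - mean m q phi ^ 2) / INR k.
Proof.
  intro Hk; assert (HK : 0 < INR k) by (apply lt_0_INR; lia).
  rewrite (expect_iid_ext _ _ (fun l => / INR k ^ 2 * sum_first k phi l ^ 2))
    by (intro; unfold sample_mean; field; lra).
  rewrite expect_iid_scal, expect_iid_sum_first_sq; field; lra.
Qed.

Lemma expect_iid_sample_mean_var k phi : (0 < k)%nat ->
  expect_iid k m q (fun l => (sample_mean k phi l - mean m q phi) ^ 2) <=
  mean m q (fun z => phi z ^ 2) / INR k.
Proof.
  intro Hk; assert (HK : 0 < INR k) by (apply lt_0_INR; lia).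
  set (M := mean m q phi).
  rewrite (expect_iid_ext _ _ (fun l => sample_mean k phi l ^ 2 +
      (- 2 * M / INR k * sum_first k phi l + M ^ 2)))
    by (intro; unfold sample_mean; field; lra).
  rewrite expect_iid_plus, expect_iid_plus, expect_iid_scal, expect_iid_const,
    expect_iid_sample_mean_sq, expect_iid_sum_first by exact Hk.
  fold M.
  assert (0 <= M ^ 2 / INR k)
    by (apply Rmult_le_pos; [apply pow2_ge_0 | apply Rlt_le, Rinv_0_lt_compat, HK]).
  replace (M ^ 2 + (mean m q (fun z => phi z ^ 2) - M ^ 2) / INR k +
    (-2 * M / INR k * (INR k * M) + M ^ 2))
    with (mean m q (fun z => phi z ^ 2) / INR k - M ^ 2 / INR k) by (field; lra).
  lra.
Qed.

Lemma expect_iid_sq_div n f c :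
  expect_iid n m q (fun l => f l ^ 2 / c ^ 2) = expect_iid n m q (fun l => f l ^ 2) / c ^ 2.
Proof.
  unfold Rdiv; rewrite Rmult_comm, <- expect_iid_scal.
  apply expect_iid_ext; intro; ring.
Qed.

Lemma expect_iid_prod_estimator_sq k1 k2 j A B C x y z d :
  x ^ 2 <= 1 ->
  expect_iid k1 m q (fun l => (A l - x) ^ 2) <= d ->
  expect_iid k2 m q (fun l => (B l - y) ^ 2) <= d ->
  expect_iid k2 m q (fun l => B l ^ 2) <= 1 + d ->
  expect_iid j m q (fun l => (C l - z) ^ 2) <= d ->
  expect_iid (k1 + (k2 + j)) m q (fun l =>
    (A (firstn k1 l) * B (firstn k2 (skipn k1 l)) - C (skipn k2 (skipn k1 l))
     - (x * y - z)) ^ 2)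
  <= 4 * d * (1 + d) + 6 * d.
Proof.
  intros Hx HA HB HB2 HC.
  set (A' := fun l => A (firstn k1 l)).
  set (B' := fun l => B (firstn k2 (skipn k1 l))).
  set (C' := fun l => C (skipn k2 (skipn k1 l))).
  assert (EA : expect_iid (k1 + (k2 + j)) m q (fun l => ((A' l - x) * B' l) ^ 2) =
      expect_iid k1 m q (fun l => (A l - x) ^ 2) * expect_iid k2 m q (fun l => B l ^ 2)).
  { rewrite <- (expect_iid_firstn k2 j (fun l => B l ^ 2)).
    rewrite <- (expect_iid_split_mult k1 (k2 + j) (fun l => (A l - x) ^ 2)
      (fun l => B (firstn k2 l) ^ 2)).
    apply expect_iid_ext; intro; unfold A', B'; ring. }
  assert (EB : expect_iid (k1 + (k2 + j)) m q (fun l => (B' l - y) ^ 2) =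
      expect_iid k2 m q (fun l => (B l - y) ^ 2)).
  { rewrite <- (expect_iid_firstn k2 j (fun l => (B l - y) ^ 2)).
    exact (expect_iid_skipn k1 (k2 + j) (fun l => (B (firstn k2 l) - y) ^ 2)). }
  assert (EC : expect_iid (k1 + (k2 + j)) m q (fun l => (C' l - z) ^ 2) =
      expect_iid j m q (fun l => (C l - z) ^ 2)).
  { rewrite <- (expect_iid_skipn k2 j (fun l => (C l - z) ^ 2)).
    exact (expect_iid_skipn k1 (k2 + j) (fun l => (C (skipn k2 l) - z) ^ 2)). }
  apply Rle_trans with (expect_iid (k1 + (k2 + j)) m q (fun l =>
    4 * ((A' l - x) * B' l) ^ 2 + (4 * (B' l - y) ^ 2 + 2 * (C' l - z) ^ 2))).
  { apply expect_iid_le; intro l.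
    change (A (firstn k1 l)) with (A' l); change (B (firstn k2 (skipn k1 l))) with (B' l);
    change (C (skipn k2 (skipn k1 l))) with (C' l).
    replace (A' l * B' l - C' l - (x * y - z))
      with ((A' l - x) * B' l + x * (B' l - y) - (C' l - z)) by ring.
    rewrite <- Rplus_assoc; apply sq_add_mul_sub_le, Hx. }
  rewrite !expect_iid_plus, !expect_iid_scal, EA, EB, EC.
  pose proof (expect_iid_sq_ge0 k1 (fun l => A l - x)).
  pose proof (expect_iid_sq_ge0 k2 B).
  assert (expect_iid k1 m q (fun l => (A l - x) ^ 2) * expect_iid k2 m q (fun l => B l ^ 2)
    <= d * (1 + d)) by (apply Rmult_le_compat; assumption).
  lra.
Qed.

Lemma expect_iid_accept_small_ge n g T t :
  Rabs t < g ->
  expect_iid n m q (fun l => (T l - t) ^ 2) <= (g - Rabs t) ^ 2 / 3 ->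
  expect_iid n m q (accept_small g T) >= 2 / 3.
Proof.
  intros Ht HT.
  assert (Hc : 0 < g - Rabs t) by lra.
  assert (H1 : expect_iid n m q (fun l => 1 + -1 * accept_small g T l) <=
      expect_iid n m q (fun l => (T l - t) ^ 2 / (g - Rabs t) ^ 2)).
  { apply expect_iid_le; intro l; unfold accept_small.
    destruct Rle_dec as [Hle | Hgt].
    - assert (0 <= (T l - t) ^ 2 / (g - Rabs t) ^ 2)
        by (apply Rmult_le_pos; [apply pow2_ge_0 | apply Rlt_le, Rinv_0_lt_compat; nra]).
      lra.
    - assert (1 <= (T l - t) ^ 2 / (g - Rabs t) ^ 2); [| lra].
      apply one_le_sq_div_sq; [exact Hc |].
      pose proof (Rabs_triang_inv (T l) t); lra. }
  rewrite expect_iid_plus, expect_iid_const, (expect_iid_scal n (-1) (accept_small g T)),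
    expect_iid_sq_div in H1.
  assert (expect_iid n m q (fun l => (T l - t) ^ 2) / (g - Rabs t) ^ 2 <= 1 / 3).
  { apply Rmult_le_reg_r with ((g - Rabs t) ^ 2); [nra |].
    unfold Rdiv; rewrite Rmult_assoc, Rinv_l by nra; lra. }
  lra.
Qed.

Lemma expect_iid_accept_small_le n g T t :
  g < Rabs t ->
  expect_iid n m q (fun l => (T l - t) ^ 2) <= (Rabs t - g) ^ 2 / 3 ->
  expect_iid n m q (accept_small g T) <= 1 / 3.
Proof.
  intros Ht HT.
  assert (Hc : 0 < Rabs t - g) by lra.
  apply Rle_trans with (expect_iid n m q (fun l => (T l - t) ^ 2 / (Rabs t - g) ^ 2)).
  { apply expect_iid_le; intro l; unfold accept_small.
    destruct Rle_dec as [Hle | Hgt].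
    - apply one_le_sq_div_sq; [exact Hc |].
      rewrite Rabs_minus_sym; pose proof (Rabs_triang_inv t (T l)); lra.
    - apply Rmult_le_pos; [apply pow2_ge_0 | apply Rlt_le, Rinv_0_lt_compat; nra]. }
  rewrite expect_iid_sq_div.
  apply Rmult_le_reg_r with ((Rabs t - g) ^ 2); [nra |].
  unfold Rdiv; rewrite Rmult_assoc, Rinv_l by nra; lra.
Qed.

End IidExpectation.

Definition bsign (x : bool) : R := if x then -1 else 1.

Definition query (j : nat) (a b : bool) : bool :=
  match j with 0%nat => a | 1%nat => b | _ => xorb a b end.

Definition rr_keep (e : R) : R := e / (e + 1) / 3.
Definition rr_flip (e : R) : R := 1 / (e + 1) / 3.

(* Message [2 j + s] (j < 3) announces the answer [s] to [query j]: a user picks one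
   of the three queries uniformly and answers it by [e]-randomized response. *)
Definition rr_channel (e : R) (z : nat) (a b : bool) : R :=
  if (z <? 6)%nat then
    if Bool.eqb (Nat.odd z) (query (Nat.div2 z) a b) then rr_keep e else rr_flip e
  else 0.

(* Undoes the factor 1/3 of choosing the query and the shrinkage (e - 1)/(e + 1)
   of randomized response. *)
Definition rr_scale (e : R) : R := 3 * (e + 1) / (e - 1).

Definition rr_est (e : R) (j z : nat) : R :=
  if andb (z <? 6)%nat (Nat.div2 z =? j)%nat then bsign (Nat.odd z) * rr_scale e else 0.

Definition sgn_mean (j : nat) (p : bool -> bool -> R) : R :=
  sum4 (fun a b => p a b * bsign (query j a b)).

Section RandomizedResponse.

Variable e : R.
Hypothesis e_gt1 : 1 < e.

Lemma rr_keep_flip_ge0 : 0 <= rr_keep e /\ 0 <= rr_flip e.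
Proof.
  unfold rr_keep, rr_flip; split; unfold Rdiv;
    repeat apply Rmult_le_pos; try lra; apply Rlt_le, Rinv_0_lt_compat; lra.
Qed.

Lemma rr_channel_ge0 z a b : 0 <= rr_channel e z a b.
Proof.
  destruct rr_keep_flip_ge0; unfold rr_channel.
  destruct (z <? 6)%nat; [destruct Bool.eqb |]; lra.
Qed.

Lemma rr_channel_is_channel : is_channel 6 (rr_channel e).
Proof.
  split; [exact rr_channel_ge0 |].
  intros [|] [|]; unfold rr_channel; simpl; unfold rr_keep, rr_flip; field; lra.
Qed.

Lemma rr_channel_ratio z a b a' b' : (z < 6)%nat ->
  rr_channel e z a b <= e * rr_channel e z a' b'.
Proof.
  intro Hz; destruct rr_keep_flip_ge0.
  assert (rr_keep e = e * rr_flip e) by (unfold rr_keep, rr_flip; field; lra).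
  unfold rr_channel; apply Nat.ltb_lt in Hz; rewrite Hz.
  destruct Bool.eqb, Bool.eqb; nra.
Qed.

Lemma msg_law_ge0 p : is_dist2 p -> forall z, 0 <= msg_law (rr_channel e) p z.
Proof.
  intros [Hp _] z; unfold msg_law, sum4.
  pose proof (rr_channel_ge0 z).
  repeat apply Rplus_le_le_0_compat; apply Rmult_le_pos; auto.
Qed.

Lemma msg_law_sum p : is_dist2 p -> sumR 6 (msg_law (rr_channel e) p) = 1.
Proof.
  intros [_ Hs]; unfold sum4 in Hs; unfold msg_law, sum4, rr_channel; simpl.
  unfold rr_keep, rr_flip.
  replace (p true true) with (1 - p false false - p false true - p true false) by lra.
  field; lra.
Qed.

Lemma rr_est_unbiased j p : (j < 3)%nat ->
  mean 6 (msg_law (rr_channel e) p) (rr_est e j) = sgn_mean j p.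
Proof.
  intro Hj; unfold mean, msg_law, sgn_mean, sum4, rr_est, rr_scale, rr_channel.
  destruct j as [|[|[|j]]]; try lia; simpl; unfold rr_keep, rr_flip; field; lra.
Qed.

Lemma rr_est_second_moment j p : is_dist2 p -> (j < 3)%nat ->
  mean 6 (msg_law (rr_channel e) p) (fun z => rr_est e j z ^ 2) = rr_scale e ^ 2 / 3.
Proof.
  intros [_ Hs] Hj; unfold sum4 in Hs; unfold mean, msg_law, sum4, rr_est, rr_channel.
  replace (p true true) with (1 - p false false - p false true - p true false) by lra.
  destruct j as [|[|[|j]]]; try lia; simpl; unfold rr_keep, rr_flip; field; lra.
Qed.

End RandomizedResponse.

Lemma rr_channel_LDP eps : 0 < eps -> is_LDP eps 6 (rr_channel (exp eps)).
Proof.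
  intros Heps z a b a' b' Hz.
  apply rr_channel_ratio; [pose proof (exp_ineq1 eps); lra | exact Hz].
Qed.

Definition det2 (p : bool -> bool -> R) : R :=
  p false false * p true true - p false true * p true false.

Definition indep_gap (p : bool -> bool -> R) : R :=
  sgn_mean 0 p * sgn_mean 1 p - sgn_mean 2 p.

Definition marg_fst (p : bool -> bool -> R) (a : bool) : R := p a false + p a true.
Definition marg_snd (p : bool -> bool -> R) (b : bool) : R := p false b + p true b.

Lemma sgn_mean_sq_le1 j p : is_dist2 p -> sgn_mean j p ^ 2 <= 1.
Proof.
  intros [Hp Hs]; unfold sum4 in Hs.
  pose proof (Hp false false); pose proof (Hp false true);
    pose proof (Hp true false); pose proof (Hp true true).
  assert (-1 <= sgn_mean j p <= 1); [| nra].
  unfold sgn_mean, sum4, bsign.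
  destruct (query j false false), (query j false true), (query j true false),
    (query j true true); lra.
Qed.

Lemma indep_gap_det2 p : is_dist2 p -> indep_gap p = - 4 * det2 p.
Proof.
  intros [_ Hs]; unfold sum4 in Hs; unfold indep_gap, sgn_mean, sum4, det2, bsign; simpl.
  replace (p true true) with (1 - p false false - p false true - p true false) by lra.
  ring.
Qed.

Lemma indep_gap_product p : is_product p -> indep_gap p = 0.
Proof.
  intros (p1 & p2 & [_ H1] & [_ H2] & Hp).
  unfold indep_gap, sgn_mean, sum4, bsign; simpl; rewrite !Hp.
  replace (p1 true) with (1 - p1 false) by lra.
  replace (p2 true) with (1 - p2 false) by lra.
  ring.
Qed.

Lemma marg_product_is_dist2 p :
  is_dist2 p -> is_dist2 (fun a b => marg_fst p a * marg_snd p b).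
Proof.
  intros [Hp Hs]; unfold sum4 in Hs; unfold marg_fst, marg_snd; split.
  - intros a b; apply Rmult_le_pos; apply Rplus_le_le_0_compat; apply Hp.
  - unfold sum4.
    replace (p true true) with (1 - p false false - p false true - p true false) by lra.
    ring.
Qed.

Lemma marg_product_is_product p : is_dist2 p ->
  is_product (fun a b => marg_fst p a * marg_snd p b).
Proof.
  intros [Hp Hs]; unfold sum4 in Hs.
  exists (marg_fst p), (marg_snd p); unfold marg_fst, marg_snd.
  repeat split; try (intro c; apply Rplus_le_le_0_compat; apply Hp); lra.
Qed.

Lemma dTV_marg_product p : is_dist2 p ->
  dTV p (fun a b => marg_fst p a * marg_snd p b) = 2 * Rabs (det2 p).
Proof.
  intros [_ Hs]; unfold sum4 in Hs; unfold dTV, sum4, marg_fst, marg_snd.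
  assert (Ht : p true true = 1 - p false false - p false true - p true false) by lra.
  rewrite <- (Rabs_Ropp (p false true - _)), <- (Rabs_Ropp (p true false - _)).
  replace (p false false - _) with (det2 p) by (unfold det2; rewrite Ht; ring).
  replace (- (p false true - _)) with (det2 p) by (unfold det2; rewrite Ht; ring).
  replace (- (p true false - _)) with (det2 p) by (unfold det2; rewrite Ht; ring).
  replace (p true true - _) with (det2 p) by (unfold det2; rewrite Ht; ring).
  field.
Qed.

Lemma gamma_far_indep_gap gam p :
  is_dist2 p -> gamma_far gam p -> 2 * gam < Rabs (indep_gap p).
Proof.
  intros Hp Hfar.
  pose proof (Hfar _ (marg_product_is_dist2 p Hp) (marg_product_is_product p Hp)) as H.
  rewrite dTV_marg_product in H by exact Hp.
  rewrite indep_gap_det2, Rabs_mult by exact Hp.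
  rewrite Rabs_left by lra; lra.
Qed.

Definition indep_stat (e : R) (k : nat) (l : list nat) : R :=
  sample_mean k (rr_est e 0) l * sample_mean k (rr_est e 1) (skipn k l)
  - sample_mean k (rr_est e 2) (skipn k (skipn k l)).

Lemma indep_stat_mse e p k r :
  1 < e -> is_dist2 p -> (0 < k)%nat -> rr_scale e ^ 2 / 3 / INR k <= 1 ->
  expect_iid (k + (k + (k + r))) 6 (msg_law (rr_channel e) p)
    (fun l => (indep_stat e k l - indep_gap p) ^ 2) <= 14 * (rr_scale e ^ 2 / 3 / INR k).
Proof.
  intros He Hp Hk Hd1.
  pose proof (msg_law_ge0 e He p Hp) as Hq; pose proof (msg_law_sum e He p Hp) as Hs.
  set (q := msg_law (rr_channel e) p) in *; set (d := rr_scale e ^ 2 / 3 / INR k) in *.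
  assert (Hd0 : 0 <= d).
  { assert (0 < INR k) by (apply lt_0_INR; lia).
    apply Rmult_le_pos; [pose proof (pow2_ge_0 (rr_scale e)); lra |].
    apply Rlt_le, Rinv_0_lt_compat; lra. }
  assert (Hvar : forall j, (j < 3)%nat ->
    expect_iid k 6 q (fun l => (sample_mean k (rr_est e j) l - sgn_mean j p) ^ 2) <= d).
  { intros j Hj; unfold d.
    rewrite <- (rr_est_unbiased e He j p Hj), <- (rr_est_second_moment e He j p Hp Hj).
    exact (expect_iid_sample_mean_var _ q Hs k (rr_est e j) Hk). }
  assert (Hsnd : expect_iid k 6 q (fun l => sample_mean k (rr_est e 1) l ^ 2) <= 1 + d).
  { rewrite (expect_iid_sample_mean_sq _ q Hs k _ Hk).
    unfold q; rewrite (rr_est_unbiased e He 1 p), (rr_est_second_moment e He 1 p Hp) by lia.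
    pose proof (sgn_mean_sq_le1 1 p Hp); pose proof (pow2_ge_0 (sgn_mean 1 p)).
    assert (sgn_mean 1 p ^ 2 / INR k >= 0)
      by (apply Rle_ge, Rmult_le_pos; [lra | apply Rlt_le, Rinv_0_lt_compat, lt_0_INR; lia]).
    unfold d, Rdiv in *; lra. }
  assert (Hthird : expect_iid (k + r) 6 q
      (fun l => (sample_mean k (rr_est e 2) l - sgn_mean 2 p) ^ 2) <= d).
  { rewrite (expect_iid_ext _ _ _ _
      (fun l => (sample_mean k (rr_est e 2) (firstn k l) - sgn_mean 2 p) ^ 2))
      by (intro; rewrite sample_mean_firstn; reflexivity).
    rewrite (expect_iid_firstn _ q Hs k r
      (fun l => (sample_mean k (rr_est e 2) l - sgn_mean 2 p) ^ 2)).
    apply Hvar; lia. }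
  rewrite (expect_iid_ext _ _ _ _ (fun l =>
    (sample_mean k (rr_est e 0) (firstn k l)
       * sample_mean k (rr_est e 1) (firstn k (skipn k l))
     - sample_mean k (rr_est e 2) (skipn k (skipn k l)) - indep_gap p) ^ 2))
    by (intro; unfold indep_stat; rewrite !sample_mean_firstn; reflexivity).
  apply Rle_trans with (4 * d * (1 + d) + 6 * d); [| nra].
  apply expect_iid_prod_estimator_sq; auto using sgn_mean_sq_le1.
Qed.

Lemma rr_scale_exp_mul_le eps : 0 < eps <= 1 -> rr_scale (exp eps) * eps <= 12.
Proof.
  intro Heps.
  assert (He1 : 1 + eps < exp eps) by (apply exp_ineq1; lra).
  assert (He3 : exp eps <= 3).
  { apply Rle_trans with (exp 1); [| exact exp_le_3].
    destruct (Rle_lt_or_eq_dec eps 1 (proj2 Heps)) as [Hlt | ->];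
      [apply Rlt_le, exp_increasing, Hlt | lra]. }
  unfold rr_scale.
  replace (3 * (exp eps + 1) / (exp eps - 1) * eps)
    with (3 * (exp eps + 1) * (eps / (exp eps - 1))) by (field; lra).
  assert (0 <= eps / (exp eps - 1) <= 1); [| nra].
  split; [apply Rmult_le_pos; [lra | apply Rlt_le, Rinv_0_lt_compat; lra] |].
  apply Rmult_le_reg_r with (exp eps - 1); [lra |].
  unfold Rdiv; rewrite Rmult_assoc, Rinv_l by lra; lra.
Qed.

Lemma sample_size_variance eps gam n :
  0 < eps <= 1 -> 0 < gam <= 1 -> INR n >= 10000 / (gam ^ 2 * eps ^ 2) ->
  (0 < n / 3)%nat /\ rr_scale (exp eps) ^ 2 / 3 / INR (n / 3) <= gam ^ 2 / 42.
Proof.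
  intros Heps Hgam Hn.
  set (X := gam ^ 2 * eps ^ 2) in Hn.
  assert (HX : 0 < X <= 1).
  { assert (0 < gam ^ 2 <= 1 /\ 0 < eps ^ 2 <= 1) by (split; split; nra).
    unfold X; split; [apply Rmult_lt_0_compat |]; nra. }
  assert (HnX : INR n * X >= 10000).
  { apply Rle_ge; apply Rge_le in Hn.
    apply Rmult_le_reg_r with (/ X); [apply Rinv_0_lt_compat; lra |].
    rewrite Rmult_assoc, Rinv_r by lra; lra. }
  assert (Hdiv : INR n <= 3 * INR (n / 3) + 2).
  { pose proof (Nat.div_mod_eq n 3); pose proof (Nat.mod_upper_bound n 3 ltac:(lia)).
    assert (Hle : (n <= 3 * (n / 3) + 2)%nat) by lia.
    apply le_INR in Hle; rewrite plus_INR, mult_INR in Hle.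
    replace (INR 3) with 3 in Hle by (simpl; ring).
    replace (INR 2) with 2 in Hle by (simpl; ring).
    exact Hle. }
  assert (HkX : INR (n / 3) * X >= 3332) by nra.
  assert (Hk : 0 < INR (n / 3)) by (pose proof (pos_INR (n / 3)); nra).
  split; [apply INR_lt; exact Hk |].
  pose proof (rr_scale_exp_mul_le eps Heps) as Hs.
  assert (Hs2 : rr_scale (exp eps) ^ 2 * eps ^ 2 <= 144).
  { rewrite <- Rpow_mult_distr.
    assert (0 <= rr_scale (exp eps) * eps); [| nra].
    apply Rmult_le_pos; [| lra].
    unfold rr_scale; pose proof (exp_ineq1 eps); apply Rmult_le_pos;
      [| apply Rlt_le, Rinv_0_lt_compat]; lra. }
  apply Rmult_le_reg_r with (126 * INR (n / 3) * eps ^ 2); [apply Rmult_lt_0_compat; nra |].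
  replace (rr_scale (exp eps) ^ 2 / 3 / INR (n / 3) * (126 * INR (n / 3) * eps ^ 2))
    with (42 * (rr_scale (exp eps) ^ 2 * eps ^ 2)) by (field; lra).
  replace (gam ^ 2 / 42 * (126 * INR (n / 3) * eps ^ 2)) with (3 * (INR (n / 3) * X))
    by (unfold X; field).
  lra.
Qed.

Theorem corollary2p8 :
  exists C : R, 0 < C /\
  forall (eps gam : R) (n : nat),
    0 < eps <= 1 -> 0 < gam <= 1 ->
    INR n >= C / (gam ^ 2 * eps ^ 2) ->
    exists (m : nat) (W : nat -> bool -> bool -> R) (f : list nat -> R),
      is_channel m W /\ is_LDP eps m W /\
      (forall zs, 0 <= f zs <= 1) /\
      forall p : bool -> bool -> R, is_dist2 p ->
        (is_product p -> prob_indep n m W f p >= 2 / 3) /\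
        (gamma_far gam p -> 1 - prob_indep n m W f p >= 2 / 3).
Proof.
  exists 10000; split; [lra |]; intros eps gam n Heps Hgam Hn.
  destruct (sample_size_variance eps gam n Heps Hgam Hn) as [Hk Hd].
  assert (He : 1 < exp eps) by (pose proof (exp_ineq1 eps); lra).
  set (k := (n / 3)%nat) in *; set (e := exp eps) in *.
  exists 6%nat, (rr_channel e), (accept_small gam (indep_stat e k)).
  split; [exact (rr_channel_is_channel e He) |].
  split; [exact (rr_channel_LDP eps (proj1 Heps)) |].
  split; [intro; unfold accept_small; destruct Rle_dec; lra |].
  intros p Hp; unfold prob_indep.
  assert (Hn3 : n = (k + (k + (k + n mod 3)))%nat)
    by (pose proof (Nat.div_mod_eq n 3); unfold k; lia).
  pose proof (indep_stat_mse e p k (n mod 3) He Hp Hk ltac:(nra)) as Hmse.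
  rewrite <- Hn3 in Hmse.
  pose proof (msg_law_ge0 e He p Hp); pose proof (msg_law_sum e He p Hp).
  split.
  - intro Hprod; rewrite (indep_gap_product p Hprod) in Hmse.
    apply expect_iid_accept_small_ge with 0; auto; rewrite Rabs_R0; [lra |].
    rewrite Rminus_0_r; lra.
  - intro Hfar; pose proof (gamma_far_indep_gap gam p Hp Hfar).
    assert (expect_iid n 6 (msg_law (rr_channel e) p) (accept_small gam (indep_stat e k))
      <= 1 / 3); [| lra].
    apply expect_iid_accept_small_le with (indep_gap p); auto; [lra |].
    nra.
Qed.
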